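(* In the setting below, $(K,\mathbb{V})$ is a symmetric decomposition of the kernel $Q$ of the Unweighted Graph Sampler on $\mathcal{G}$, i.e. for every $G\in\mathcal{G}$ and $z\in\mathcal{Z}$, $\mathbb{V}_G(z)=\mathbb{V}_{G^*}(z)$ for every $G^*$ with $K_z(G,G^* )>0$; and each $K_z\in K$ is reversible with respect to the uniform distribution on $\mathcal{G}$ (indeed $K_z(G,G^* )=K_z(G^*,G)$ for all $G,G^*\in\mathcal{G}$).
   Context: Setting (unweighted graphs). $V$ is a finite vertex set; graphs are either all directed or all undirected with no multiple edges; $uv$ denotes the possible edge from $u$ to $v$ ($uv=vu$ if undirected). $G_0$ is a given graph on $V$ and $\mathcal{F}$ a given set of possible edges. $\mathcal{G}$ is the set of graphs $G$ on $V$ with the same degree sequence as $G_0$ (in- and out-degrees if directed) and $E(G)\cap\mathcal{F}=E(G_0)\cap\mathcal{F}$. $\tilde{\mathcal{F}}$ is the set of possible edges $uv$ that are present in every $G\in\mathcal{G}$ or absent from every $G\in\mathcal{G}$. $N_G(u)=\{v: vu\in E(G), vu\notin\tilde{\mathcal{F}}\}$, $M_G(u)=\{v: uv\notin E(G), uv\notin\tilde{\mathcal{F}}\}$. Unweighted Graph Sampler (one iteration from $G$): $W_{-1}=*$; $W_0\sim$ Uniform$\{v: N_G(v)\ne\emptyset\}$; $n=0$; repeat [$W_{n+1}\sim$ Uniform$(N_G(W_n)\setminus\{W_{n-1}\})$; $W_{n+2}\sim$ Uniform$(M_G(W_{n+1}))$; remove $W_{n+1}W_n$ from and add $W_{n+1}W_{n+2}$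 to the current graph; $n\leftarrow n+2$] until $W_n=W_0$; output the current graph. $Q$ denotes the Markov kernel on $\mathcal{G}$ of this procedure. The sampled sequence $W$ has the form $w_0w_1\cdots w_kw_0$ with $k$ odd; $\mathcal{W}$ is the set of such sequences. Swaps: $a_1b_1\leftrightarrow a_2b_2$ replaces edge $a_1b_1$ with $a_2b_2$; it is viable iff $a_1b_1$ is an edge, $a_2b_2$ is not, and neither lies in $\mathcal{F}$. The swaps corresponding to $w=w_0\cdots w_kw_0$ are $w_1w_0\leftrightarrow w_1w_2, w_3w_2\leftrightarrow w_3w_4,\dots,w_kw_{k-1}\leftrightarrow w_kw_0$ applied in order; they are viable iff each is viable when applied iteratively. $w^r$ denotes the reverse sequence. Kernels: two sequences in $\mathcal{W}$ are equivalent iff identical or each other's reverse; $\mathcal{Z}$ is the set of equivalence classes. For $z\in\mathcal{Z}$ with representative $w$, $K_z$ is the deterministic kernel on $\mathcal{G}$ which from $G$ performs the swaps corresponding to $w$ if viable; otherwise performs those corresponding to $w^r$ if viable; otherwise leaves $G$ unchanged (this does not depend on the representative). $K=\{K_z\}$. $\mathbb{V}_G(z)$ is the probability that the sequence $W$ sampled by the Unweighted Graph Sampler from $G$ lies in $z$ (i.e. equals $w$ or $w^r$). A decomposition $(K,\mathbb{V})$ of $Q$ means $Q(G,\cdot)=\sum_z \mathbb{V}_G(z)K_z(G,\cdot)$; it is symmetric if $\mathbb{V}_G(z)=\mathbb{V}_{G^*}(z)$ whenever $K_z(G,G^* )>0$. *)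

(* Probabilities are rationals (all sampler probabilities are
   products of reciprocals of cardinalities). *)
From HB Require Import structures.
From mathcomp Require Import all_boot all_order all_algebra.
Set Implicit Arguments. Unset Strict Implicit. Unset Printing Implicit Defensive.
Import Order.TTheory GRing.Theory Num.Theory.
Local Open Scope ring_scope.

Section Sampler.
Variables (V : finType) (dir : bool) (G0 F : {set V * V}).
(* A graph is a set of ordered pairs; (u,v) \in G  means the possible edge uv
   is present.  For undirected graphs (dir = false) the set is symmetric. *)
Definition graph := {set V * V}.

Definition is_graph (G : graph) : bool :=
  [forall u, (u, u) \notin G] &&
  (dir || [forall u, forall v, ((u, v) \in G) == ((v, u) \in G)]).

Definition inF (u v : V) : bool := ((u, v) \in F) || (~~ dir && ((v, u) \in F)).

Definition outdeg (G : graph) (u : V) : nat := #|[set v | (u, v) \in G]|.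
Definition indeg (G : graph) (u : V) : nat := #|[set v | (v, u) \in G]|.

Definition inGG (G : graph) : bool :=
  [&& is_graph G,
      [forall u, (outdeg G u == outdeg G0 u) && (indeg G u == indeg G0 u)] &
      [forall u, forall v, inF u v ==> (((u, v) \in G) == ((u, v) \in G0))]].

Definition Ft (u v : V) : bool :=
  [forall G : {set V * V}, inGG G ==> ((u, v) \in G)] ||
  [forall G : {set V * V}, inGG G ==> ((u, v) \notin G)].

Definition Nset (G : graph) (u : V) : {set V} := [set v | ((v, u) \in G) && ~~ Ft v u].
Definition Mset (G : graph) (u : V) : {set V} := [set v | ((u, v) \notin G) && ~~ Ft u v].

Definition rem_edge (G : graph) (a b : V) : graph :=
  if dir then G :\ (a, b) else G :\ (a, b) :\ (b, a).
Definition add_edge (G : graph) (a b : V) : graph :=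
  if dir then (a, b) |: G else (a, b) |: ((b, a) |: G).

(* One run of the sampler: current graph H, previous vertex W_{n-1} (None = * ),
   current vertex W_n, and the remaining sampled vertices W_{n+1} W_{n+2} ...
   Returns (probability of sampling exactly these vertices and stopping right
   after the last one, resulting graph). *)
Fixpoint run (w0 : V) (H : graph) (prev : option V) (cur : V) (t : seq V)
    : rat * graph :=
  match t with
  | a :: b :: t' =>
      let Ns := Nset H cur :\: (if prev is Some p then [set p] else set0) in
      let Ms := Mset H a in
      let H' := add_edge (rem_edge H a cur) a b in
      let pstep := if (a \in Ns) && (b \in Ms)
                   then (#|Ns|%:R)^-1 * (#|Ms|%:R)^-1 else 0 in
      if t' is [::] then (if b == w0 then (pstep, H') else (0, H'))
      else if b == w0 then (0, H')
      else let r := run w0 H' (Some a) b t' in (pstep * r.1, r.2)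
  | _ => (0, H)
  end.

(* Probability that the sampler started from G samples exactly the sequence w *)
Definition Pw (G : graph) (w : seq V) : rat :=
  match w with
  | w0 :: t =>
      (if Nset G w0 != set0 then (#|[set v | Nset G v != set0]|%:R)^-1 else 0)
      * (run w0 G None w0 t).1
  | [::] => 0
  end.

Definition outw (G : graph) (w : seq V) : graph :=
  match w with w0 :: t => (run w0 G None w0 t).2 | [::] => G end.

(* \mathcal{W}: sequences w0 w1 ... wk w0 with k odd (full sequence incl. closing w0) *)
Definition inW (w : seq V) : bool :=
  [&& odd (size w), (3 <= size w)%N &
      (if w is w0 :: _ then last w0 w == w0 else false)].

Definition viable (H : graph) (a1 b1 a2 b2 : V) : bool :=
  [&& (a1, b1) \in H, a2 != b2, (a2, b2) \notin H, ~~ inF a1 b1 & ~~ inF a2 b2].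

Fixpoint swaps (H : graph) (cur : V) (t : seq V) : option graph :=
  match t with
  | [::] => Some H
  | a :: b :: t' =>
      if viable H a cur a b then swaps (add_edge (rem_edge H a cur) a b) b t'
      else None
  | [:: _] => None
  end.

Definition swaps_seq (G : graph) (w : seq V) : option graph :=
  if w is w0 :: t then swaps G w0 t else Some G.

(* canonical representative of the class {w, rev w} *)
Fixpoint lexle (s1 s2 : seq nat) : bool :=
  match s1, s2 with
  | [::], _ => true
  | _ :: _, [::] => false
  | x :: s1', y :: s2' => (x < y)%N || ((x == y) && lexle s1' s2')
  end.
Definition canon (w : seq V) : seq V :=
  if lexle [seq val (enum_rank x) | x <- w] [seq val (enum_rank x) | x <- rev w]
  then w else rev w.

Definition Kmap (w : seq V) (G : graph) : graph :=
  let r := canon w in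
  match swaps_seq G r with
  | Some H => H
  | None => match swaps_seq G (rev r) with Some H => H | None => G end
  end.
Definition Kker (w : seq V) (G Gs : graph) : rat := (Kmap w G == Gs)%:R.

Definition Vz (G : graph) (w : seq V) : rat :=
  Pw G w + (if rev w != w then Pw G (rev w) else 0).

(* Q(G,G') restricted to sampled sequences of length n *)
Definition Qpart (n : nat) (G Gs : graph) : rat :=
  \sum_(w : n.-tuple V | inW w) Pw G w * (outw G w == Gs)%:R.
Definition Dpart (n : nat) (G Gs : graph) : rat :=
  \sum_(w : n.-tuple V | inW w && (canon w == w)) Vz G w * Kker w G Gs.

Definition unif (G : graph) : rat :=
  if inGG G then (#|[set H : {set V * V} | inGG H]|%:R)^-1 else 0.

End Sampler.

(* A sampled sequence w = w0 w1 ... wk w0 performs the swaps w1w0 <-> w1w2,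
   w3w2 <-> w3w4, ...; the kernel K_z of its class z = {w, rev w} performs them
   (or those of rev w) deterministically. The proof combines three facts.
   - Reversibility: the swaps of rev w undo those of w, and the swaps of a walk are
     never viable both from H and from their result unless trivial ([swaps_twice]);
     hence K_z is an involution ([Kmap_invol]), so K_z(G, H) = K_z(H, G).
   - Decomposition: when the sampler moves along w with positive probability, its
     move is that of K_z ([Pw_Kmap]); grouping each w with rev w turns Q(G, .) into
     sum_z V_G(z) K_z(G, .), sequence length by sequence length ([Qpart_Dpart]).
   - Symmetry: sampling w from G is as likely as sampling rev w from the graph its
     swaps produce ([wt_rev], [Pw_rev]): each swap keeps |M_H(a)|, the neighbour
     counts |N_H(c)| - 1 telescope, and the remaining endpoint factors only involve
     the numbers |N_G(v)|, which are the same for all G in \mathcal{G} ([card_Nset_GG]).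
     Hence V_G(z) = V_{K_z(G)}(z) ([Vz_Kmap]). *)

From HB Require Import structures.
From mathcomp Require Import all_boot all_order all_algebra.
From mathcomp Require Import ring.
Import Order.TTheory GRing.Theory Num.Theory.
Set Implicit Arguments. Unset Strict Implicit. Unset Printing Implicit Defensive.

Lemma pair_ind (T : Type) (P : seq T -> Prop) :
  P [::] -> (forall a, P [:: a]) -> (forall a b t, P t -> P [:: a, b & t]) ->
  forall t, P t.
Proof.
move=> P0 P1 P2 t; have [n] := ubnP (size t).
elim: n t => // n IH [|a [|b t]] //= lt; apply/P2/IH.
by rewrite ltnS in lt; exact: ltnW.
Qed.

Section Walks.
Variable T : eqType.
Implicit Types (s t : seq T) (a b c : T).

Fixpoint visits t : seq T := if t is _ :: b :: t' then b :: visits t' else [::].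

Fixpoint last_pick (p : option T) t : option T :=
  if t is a :: _ :: t' then last_pick (Some a) t' else p.

Fixpoint closes w0 t : bool :=
  match t with
  | _ :: b :: t' => if t' is [::] then b == w0 else (b != w0) && closes w0 t'
  | _ => false
  end.

Lemma visits_cat s t : ~~ odd (size s) -> visits (s ++ t) = visits s ++ visits t.
Proof. by elim/pair_ind: s => //= a b s IH; rewrite negbK => /IH ->. Qed.

Lemma last_pick_cat p s t : ~~ odd (size s) ->
  last_pick p (s ++ t) = last_pick (last_pick p s) t.
Proof. by elim/pair_ind: s p => //= a b s IH p; rewrite negbK => /IH ->. Qed.

Lemma rev_belast_step c a b t : rev (belast c [:: a, b & t]) = rev (belast b t) ++ [:: a; c].
Proof. by rewrite /= !rev_cons -!cats1 -catA. Qed.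

Lemma even_rev_belast c t : ~~ odd (size t) = ~~ odd (size (rev (belast c t))).
Proof. by rewrite size_rev size_belast. Qed.

Lemma visits_rev c t : ~~ odd (size t) -> visits (rev (belast c t)) = rev (belast c (visits t)).
Proof.
elim/pair_ind: t c => //= a b t IH c; rewrite negbK => ev.
rewrite rev_belast_step visits_cat -?even_rev_belast // IH //.
by rewrite rev_cons -cats1.
Qed.

Lemma last_pick_rev p c a b t : ~~ odd (size t) ->
  last_pick p (rev (belast c [:: a, b & t])) = Some a.
Proof. by move=> ev; rewrite rev_belast_step last_pick_cat // -even_rev_belast. Qed.

Lemma closes_last w0 c t : closes w0 t -> last c t = w0.
Proof.
elim/pair_ind: t c => //= a b t IH c.
by case: t IH => [_ /eqP //|x t IH /andP[_ /IH]].
Qed.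

Lemma last_rev c s : last c (rev s) = head c s.
Proof. by case: s => // x s; rewrite rev_cons last_rcons. Qed.

Lemma head_belast c s : head (last c s) (belast c s) = c.
Proof. by case: s. Qed.

(* A counting description of [closes], which is invariant under reversal. *)
Lemma closesE w0 t :
  closes w0 t = [&& ~~ odd (size t), count_mem w0 (visits t) == 1 & last w0 (visits t) == w0].
Proof.
elim/pair_ind: t => //= a b t ->; rewrite negbK.
case: t => [|x [|y t]] /=; rewrite ?andbF ?addn0 //; first by case: (b == w0).
case: (eqVneq b w0) => [<-|_]; last by rewrite add0n.
rewrite add1n eqSS; apply/esym/negbTE/and3P => -[_ /eqP c0 /eqP el].
have : b \notin y :: visits t by apply/count_memPn.
by rewrite -el mem_last.
Qed.

Lemma closes_rev w0 t : closes w0 t -> closes w0 (rev (belast w0 t)).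
Proof.
rewrite !closesE -even_rev_belast => /and3P[ev /eqP c1 /eqP l1].
rewrite ev visits_rev // count_rev last_rev -[X in head X _]l1 head_belast eqxx andbT /=.
have := congr1 (count_mem w0) (lastI w0 (visits t)).
by rewrite -cats1 count_cat /= l1 c1 eqxx => /eqP; rewrite eqn_add2r eq_sym.
Qed.
End Walks.

Section Swaps.
Variables (V : finType) (dir : bool) (F : {set V * V}).
Implicit Types (G H : {set V * V}) (a b c x y : V) (t : seq V).

Definition swap H c a b : {set V * V} := add_edge dir (rem_edge dir H a c) a b.

Definition same_edge a b x y : bool :=
  ((x == a) && (y == b)) || (~~ dir && (x == b) && (y == a)).
Arguments same_edge : simpl never.

Lemma same_edge_refl a b : same_edge a b a b.
Proof. by rewrite /same_edge !eqxx. Qed.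

Lemma mem_swap H c a b x y :
  ((x, y) \in swap H c a b) = same_edge a b x y || (((x, y) \in H) && ~~ same_edge a c x y).
Proof.
rewrite /swap /add_edge /rem_edge /same_edge; case: dir; rewrite /= !inE !xpair_eqE;
by case: (x == a); case: (y == b); case: (x == b); case: (y == a);
  case: (x == c); case: (y == c); case: ((x, y) \in H).
Qed.

Lemma graph_noloop H u : is_graph dir H -> (u, u) \notin H.
Proof. by case/andP=> /forallP. Qed.

Lemma graph_sym H x y : is_graph dir H -> ~~ dir -> ((x, y) \in H) = ((y, x) \in H).
Proof. by case/andP=> _ + nd; rewrite (negbTE nd) => /forallP/(_ x)/forallP/(_ y)/eqP. Qed.

Lemma mem_same_edge H a c x y : is_graph dir H -> same_edge a c x y ->
  ((x, y) \in H) = ((a, c) \in H).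
Proof.
move=> gH; case/orP=> [/andP[/eqP-> /eqP->] //|/andP[/andP[nd /eqP->] /eqP->]].
exact: graph_sym.
Qed.

Lemma swap_graph H c a b : is_graph dir H -> a != b -> is_graph dir (swap H c a b).
Proof.
move=> gH nab; apply/andP; split.
  apply/forallP=> u; rewrite mem_swap (negbTE (graph_noloop u gH)) /= orbF /same_edge.
  apply/negP; case/orP=> /andP; [case=> /eqP-> /eqP| case=> /andP[_ /eqP->] /eqP] => e;
    by rewrite e eqxx in nab.
case nd: dir => //=; apply/forallP=> x; apply/forallP=> y; apply/eqP.
rewrite !mem_swap (graph_sym x y gH) ?nd // /same_edge nd /=.
by case: (x == a); case: (y == b); case: (x == b); case: (y == a);
  case: (x == c); case: (y == c).
Qed.

Lemma swap_undo H c a b : is_graph dir H -> (a, c) \in H -> (a, b) \notin H ->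
  swap (swap H c a b) b a c = H.
Proof.
move=> gH hac hab; apply/setP=> [[x y]]; rewrite !mem_swap.
case E1: (same_edge a c x y); first by rewrite (mem_same_edge gH E1) hac.
case E2: (same_edge a b x y); rewrite /= ?andbT ?andbF //.
by rewrite (mem_same_edge gH E2) (negbTE hab).
Qed.

Lemma viable_undo H c a b : is_graph dir H -> viable dir F H a c a b ->
  viable dir F (swap H c a b) a b a c.
Proof.
move=> gH /and5P[hac nab hab nFc nFb]; apply/and5P; split => //.
- by rewrite mem_swap same_edge_refl.
- by apply: contraTneq hac => <-; rewrite (negbTE (graph_noloop a gH)).
- rewrite mem_swap same_edge_refl andbF orbF /same_edge eqxx (negbTE nab) /=.
  by rewrite andbF orbF; apply: contraNneq hab => <-.
Qed.

Fixpoint swapped H c t : {set V * V} :=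
  if t is a :: b :: t' then swapped (swap H c a b) b t' else H.

Lemma swaps_swapped H c t H' : swaps dir F H c t = Some H' -> H' = swapped H c t.
Proof.
by elim/pair_ind: t H c => [H c [] //|//|a b t IH H c /=]; case: ifP => // _ /IH.
Qed.

Lemma swaps_even H c t H' : swaps dir F H c t = Some H' -> ~~ odd (size t).
Proof. by elim/pair_ind: t H c => //= a b t IH H c; case: ifP => // _ /IH; rewrite negbK. Qed.

Lemma swaps_cat H c s t : ~~ odd (size s) ->
  swaps dir F H c (s ++ t) = obind (fun H' => swaps dir F H' (last c s) t) (swaps dir F H c s).
Proof.
elim/pair_ind: s H c => //= a b s IH H c; rewrite negbK => ev.
by case: ifP => // _; apply: IH.
Qed.

Lemma swaps_graph H c t H' : is_graph dir H -> swaps dir F H c t = Some H' -> is_graph dir H'.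
Proof.
elim/pair_ind: t H c => [H c gH [<-] //|//|a b t IH H c gH /=].
by case: ifP => // /and5P[_ nab _ _ _]; apply/IH/swap_graph.
Qed.

Lemma swaps_rev H c t H' : is_graph dir H -> swaps dir F H c t = Some H' ->
  swaps dir F H' (last c t) (rev (belast c t)) = Some H.
Proof.
elim/pair_ind: t H c H' => [H c H' _ [->] //|//|a b t IH H c H' gH /=].
case: ifP => // vi hs; have /and5P[hac nab hab _ _] := vi.
rewrite -/(swap H c a b) in hs; have gH1 := swap_graph c gH nab.
rewrite (rev_belast_step c a b t) swaps_cat; last first.
  by rewrite -even_rev_belast (swaps_even hs).
rewrite (IH _ _ _ gH1 hs) /= last_rev head_belast (viable_undo gH vi).
by rewrite -/(swap (swap H c a b) b a c) swap_undo.
Qed.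

Fixpoint touched c t x y : bool :=
  if t is a :: b :: t' then [|| same_edge a c x y, same_edge a b x y | touched b t' x y]
  else false.
Fixpoint first_removed c t x y : bool :=
  if t is a :: b :: t' then
    if same_edge a c x y then true
    else if same_edge a b x y then false else first_removed b t' x y
  else false.

Lemma swaps_touched H c t H' x y : is_graph dir H -> swaps dir F H c t = Some H' ->
  touched c t x y -> ((x, y) \in H) = first_removed c t x y.
Proof.
elim/pair_ind: t H c H' => //= a b t IH H c H' gH.
case: ifP => // /and5P[hac nab hab _ _] hs.
case E1: (same_edge a c x y); first by rewrite (mem_same_edge gH E1).
case E2: (same_edge a b x y); first by rewrite (mem_same_edge gH E2) (negbTE hab).
move=> ht; rewrite -(IH _ _ _ (swap_graph c gH nab) hs ht).
by rewrite mem_swap E1 E2 andbT.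
Qed.

Lemma swaps_untouched H c t H' x y : swaps dir F H c t = Some H' ->
  ~~ touched c t x y -> ((x, y) \in H') = ((x, y) \in H).
Proof.
elim/pair_ind: t H c H' => [H c H' [->] //|//|a b t IH H c H' /=].
case: ifP => // _ hs; rewrite negb_or => /andP[E1]; rewrite negb_or => /andP[E2 ht].
by rewrite (IH _ _ _ hs ht) mem_swap (negbTE E1) (negbTE E2) andbT.
Qed.

Lemma swaps_twice H c t H' H'' : is_graph dir H -> swaps dir F H c t = Some H' ->
  swaps dir F H' c t = Some H'' -> H' = H.
Proof.
move=> gH h1 h2; have gH' := swaps_graph gH h1.
apply/setP=> [[x y]]; case T: (touched c t x y).
  by rewrite (swaps_touched gH h1 T) (swaps_touched gH' h2 T).
by rewrite (swaps_untouched h1 (negbT T)).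
Qed.

Lemma rev_cons_last (w0 : V) t : rev (w0 :: t) = last w0 t :: rev (belast w0 t).
Proof. by rewrite lastI rev_rcons. Qed.

Lemma swaps_seq_rev G w H : is_graph dir G -> swaps_seq dir F G w = Some H ->
  swaps_seq dir F H (rev w) = Some G.
Proof.
case: w => [|w0 t] gG /=; first by case=> ->.
by rewrite rev_cons_last; apply: swaps_rev.
Qed.

Lemma swaps_seq_graph G w H : is_graph dir G -> swaps_seq dir F G w = Some H -> is_graph dir H.
Proof. by case: w => [|w0 t] gG /=; [case=> <- | exact: swaps_graph]. Qed.

Lemma swaps_seq_twice G w H H' : is_graph dir G -> swaps_seq dir F G w = Some H ->
  swaps_seq dir F H w = Some H' -> H = G.
Proof. by case: w => [|w0 t] gG /=; [case=> <- | exact: swaps_twice]. Qed.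

Lemma swaps_seq_both G w H H' : is_graph dir G -> swaps_seq dir F G w = Some H ->
  swaps_seq dir F G (rev w) = Some H' -> H = G.
Proof.
move=> gG h1 h2; have gH := swaps_seq_graph gG h1.
by rewrite (swaps_seq_twice gH (swaps_seq_rev gG h1) h2).
Qed.
End Swaps.

Lemma lexle_total (s1 s2 : seq nat) : lexle s1 s2 || lexle s2 s1.
Proof.
elim: s1 s2 => [|x s1 IH] [|y s2] //=.
by case: (ltngtP x y) => //= ->; rewrite eqxx.
Qed.

Lemma lexle_anti (s1 s2 : seq nat) : lexle s1 s2 -> lexle s2 s1 -> s1 = s2.
Proof.
elim: s1 s2 => [|x s1 IH] [|y s2] //=.
by case: (ltngtP x y) => //= -> h1 h2; rewrite (IH s2).
Qed.

Section Kernels.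
Variables (V : finType) (dir : bool) (F : {set V * V}).
Implicit Types (G H : {set V * V}) (w : seq V).

Lemma canon_cases w : canon w = w \/ canon w = rev w.
Proof. by rewrite /canon; case: ifP; [left|right]. Qed.

Lemma canon_rev w : canon (rev w) = canon w.
Proof.
rewrite /canon revK; set m := map _ w; set mr := map _ (rev w).
have inj : injective (fun x : V => val (enum_rank x)) by move=> x y /val_inj/enum_rank_inj.
case E1: (lexle m mr); case E2: (lexle mr m) => //.
  by apply: (inj_map inj); rewrite -/m -/mr (lexle_anti E1 E2).
by move: (lexle_total m mr); rewrite E1 E2.
Qed.

Lemma Kmap_rev w G : Kmap dir F (rev w) G = Kmap dir F w G.
Proof. by rewrite /Kmap canon_rev. Qed.

Lemma KmapP w G :
  [\/ swaps_seq dir F G (canon w) = Some (Kmap dir F w G),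
      swaps_seq dir F G (canon w) = None /\
        swaps_seq dir F G (rev (canon w)) = Some (Kmap dir F w G) |
      [/\ swaps_seq dir F G (canon w) = None,
          swaps_seq dir F G (rev (canon w)) = None & Kmap dir F w G = G]].
Proof.
rewrite /Kmap; case E: (swaps_seq _ _ _ _) => [H|]; first by constructor 1.
by case E': (swaps_seq _ _ _ _) => [H|]; [constructor 2 | constructor 3].
Qed.

Lemma Kmap_canon w G : Kmap dir F (canon w) G = Kmap dir F w G.
Proof. by case: (canon_cases w) => ->; rewrite ?Kmap_rev. Qed.

(* Whenever the swaps of w are viable from G, K_z performs them; if those of the
   representative rev w are viable too, both are trivial by [swaps_seq_both]. *)
Lemma Kmap_viable w G H : is_graph dir G -> swaps_seq dir F G w = Some H ->
  Kmap dir F w G = H.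
Proof.
move=> gG E; have [C|C] := canon_cases w; move: (KmapP w G); rewrite C ?revK E.
  by case=> [[->]|[]|[]].
case=> [E1|[_ [<-]] //|[_ //]].
have := swaps_seq_both gG E1; rewrite revK => /(_ _ E) ->.
by rewrite (swaps_seq_both gG E E1).
Qed.

(* K_z is an involution: the reversed swaps undo the swaps it performs. *)
Lemma Kmap_invol w G : is_graph dir G -> Kmap dir F w (Kmap dir F w G) = G.
Proof.
move=> gG; have [E|[_ E]|[_ _ KG]] := KmapP w G; last by rewrite !KG.
  set K := Kmap dir F w G in E *; rewrite -Kmap_canon -Kmap_rev.
  exact: Kmap_viable (swaps_seq_graph gG E) (swaps_seq_rev gG E).
set K := Kmap dir F w G in E *; rewrite -Kmap_canon.
by apply: Kmap_viable (swaps_seq_graph gG E) _; rewrite -[canon w]revK (swaps_seq_rev gG E).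
Qed.
End Kernels.

Local Open Scope ring_scope.

Lemma cardsD1_mem (T : finType) (A : {set T}) (i j : T) : i \in A -> j \in A ->
  #|A :\ i| = #|A :\ j|.
Proof.
move=> hi hj; have := cardsD1 i A; rewrite (cardsD1 j A) hi hj => /eqP.
by rewrite eqn_add2l => /eqP.
Qed.

Lemma card_neq0 (T : finType) (A : {set T}) (x : T) : x \in A -> (#|A|%:R != 0 :> rat).
Proof. by move=> hx; rewrite pnatr_eq0 -lt0n; apply/card_gt0P; exists x. Qed.

Section Sampler.
Variables (V : finType) (dir : bool) (G0 F : {set V * V}).
Implicit Types (G H : {set V * V}) (a b c u v : V) (p q : option V) (s t w : seq V).

Local Notation swap := (swap dir).
Local Notation swapped := (swapped dir).
Local Notation Nset := (Nset dir G0 F).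
Local Notation Mset := (Mset dir G0 F).
Local Notation inGG := (inGG dir G0 F).
Local Notation Pw := (Pw dir G0 F).

Lemma Ft_refl u : Ft dir G0 F u u.
Proof.
rewrite /Ft; apply/orP; right; apply/forallP=> G; apply/implyP=> /and3P[gG _ _].
exact: graph_noloop gG.
Qed.

Lemma inF_Ft u v : inF dir F u v -> Ft dir G0 F u v.
Proof.
move=> h; rewrite /Ft; case h0: ((u, v) \in G0); apply/orP; [left|right];
  apply/forallP=> G; apply/implyP=> /and3P[_ _ /forallP/(_ u)/forallP/(_ v)/implyP/(_ h)/eqP ->];
  by rewrite h0.
Qed.

Definition excl p : {set V} := if p is Some q then [set q] else set0.

Definition pstep H p c a b : rat :=
  let Ns := Nset H c :\: excl p in
  let Ms := Mset H a in
  if (a \in Ns) && (b \in Ms) then (#|Ns|%:R)^-1 * (#|Ms|%:R)^-1 else 0.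

(* Probability of performing the iterations of the walk t, regardless of when
   the sampler stops. *)
Fixpoint wt H p c t : rat :=
  match t with
  | a :: b :: t' => pstep H p c a b * wt (swap H c a b) (Some a) b t'
  | [:: _] => 0
  | [::] => 1
  end.

Definition start_prob G (w0 : V) : rat :=
  if Nset G w0 != set0 then (#|[set v | Nset G v != set0]|%:R)^-1 else 0.

Lemma run_cons (w0 : V) H p c a b t : run dir G0 F w0 H p c [:: a, b & t] =
  if t is [::] then ((b == w0)%:R * pstep H p c a b, swap H c a b)
  else if b == w0 then (0, swap H c a b)
  else (pstep H p c a b * (run dir G0 F w0 (swap H c a b) (Some a) b t).1,
        (run dir G0 F w0 (swap H c a b) (Some a) b t).2).
Proof. by case: t => [|x t] /=; case: (b == w0); rewrite ?mul1r ?mul0r. Qed.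

Lemma run_fst (w0 : V) H p c t : (run dir G0 F w0 H p c t).1 = (closes w0 t)%:R * wt H p c t.
Proof.
elim/pair_ind: t H p c => [||a b t IH] H p c; rewrite ?mul0r //.
rewrite run_cons [RHS]/=; case: t IH => [|x t] IH; case: (b == w0);
  by rewrite ?IH /= ?mul0r ?mul1r ?mulr1 // mulrCA.
Qed.

Lemma run_snd (w0 : V) H p c t : closes w0 t -> (run dir G0 F w0 H p c t).2 = swapped H c t.
Proof.
elim/pair_ind: t H p c => [||a b t IH] H p c //; rewrite run_cons.
by case: t IH => [//|x t IH /andP[/negbTE-> cl]]; rewrite (IH _ _ _ cl).
Qed.

Lemma PwE G (w0 : V) t :
  Pw G (w0 :: t) = start_prob G w0 * ((closes w0 t)%:R * wt G None w0 t).
Proof. by rewrite /Pw run_fst. Qed.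

Lemma pstep_mem H p c a b : pstep H p c a b != 0 ->
  a \in Nset H c :\: excl p /\ b \in Mset H a.
Proof. by rewrite /pstep; case: ifP => [/andP[] //|]; rewrite eqxx. Qed.

Lemma pstep_viable H p c a b : pstep H p c a b != 0 -> viable dir F H a c a b.
Proof.
case/pstep_mem; rewrite !inE => /andP[_ /andP[hac nFac]] /andP[hab nFab].
apply/and5P; split => //; first by apply: contraNneq nFab => <-; exact: Ft_refl.
  by apply: contra nFac; exact: inF_Ft.
by apply: contra nFab; exact: inF_Ft.
Qed.

Lemma wt_swaps H p c t : wt H p c t != 0 -> swaps dir F H c t = Some (swapped H c t).
Proof.
elim/pair_ind: t H p c => [||a b t IH] H p c //=.
by rewrite mulf_eq0 negb_or => /andP[/pstep_viable -> /IH].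
Qed.

Lemma wt_cat H p c s t : ~~ odd (size s) ->
  wt H p c (s ++ t) = wt H p c s * wt (swapped H c s) (last_pick p s) (last c s) t.
Proof.
elim/pair_ind: s H p c => [||a b s IH] H p c /=; rewrite ?mul1r // negbK => ev.
by rewrite IH // mulrA.
Qed.

Lemma Pw_Kmap G w : is_graph dir G -> Pw G w != 0 ->
  Kmap dir F w G = outw dir G0 F G w.
Proof.
case: w => [|w0 t] gG; first by rewrite /Pw eqxx.
rewrite PwE !mulf_eq0 !negb_or => /and3P[_ cl wt0].
rewrite /outw run_snd; last by case: (closes w0 t) cl.
exact/Kmap_viable/wt_swaps/wt0.
Qed.

Lemma pstep_swap H p c a b : is_graph dir H -> pstep H p c a b != 0 ->
  [/\ a \in Nset (swap H c a b) b, c \in Mset (swap H c a b) a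
    & #|Mset (swap H c a b) a| = #|Mset H a|].
Proof.
move=> gH /pstep_mem[/setDP[+ _] hb]; rewrite inE => /andP[hac nFac].
have := hb; rewrite inE => /andP[hab nFab].
have nab : a != b by apply: contraNneq nFab => <-; exact: Ft_refl.
have nac : a != c by apply: contraTneq hac => <-; exact: graph_noloop gH.
have ncb : c != b by apply: contraTneq hac => ->.
have EM : Mset (swap H c a b) a = c |: (Mset H a :\ b).
  apply/setP=> v; rewrite !inE mem_swap /same_edge eqxx /= (negbTE nab) (negbTE nac) !andbF !orbF.
  case: (eqVneq v c) => [->|nvc]; first by rewrite hac nFac (negbTE ncb).
  by rewrite /= andbT negb_or; case: (v == b); case: ((a, v) \in H).
split.
- by rewrite !inE mem_swap same_edge_refl.
- by rewrite EM !inE eqxx.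
- by rewrite EM cardsU1 !inE hac andbF /= (cardsD1 b (Mset H a)) hb.
Qed.

(* The step ca <-> ab and its inverse ab <-> ac both contribute the factor
   1 / |M_H(a)| once the choice of the neighbour a is discounted. *)
Lemma pstep_norm H p c a b : pstep H p c a b != 0 ->
  pstep H p c a b * #|Nset H c :\: excl p|%:R = (#|Mset H a|%:R)^-1.
Proof.
case/pstep_mem=> ha hb; rewrite /pstep ha hb /=.
by field; rewrite (card_neq0 ha) (card_neq0 hb).
Qed.

Lemma pstep_undo H p c a b q : is_graph dir H -> pstep H p c a b != 0 -> a \notin excl q ->
  pstep (swap H c a b) q b a c * #|Nset (swap H c a b) b :\: excl q|%:R = (#|Mset H a|%:R)^-1.
Proof.
move=> gH hp haq; have [ha hc eM] := pstep_swap gH hp.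
have ha' : a \in Nset (swap H c a b) b :\: excl q by rewrite inE haq.
rewrite /pstep ha' hc eM /=.
by field; rewrite (card_neq0 ha') -eM (card_neq0 hc).
Qed.

(* By induction: the first step contributes
   1 / |M_H(a)| to the walk ([pstep_norm]) and the undoing step, appended to the
   reversed remainder, contributes the same ([pstep_undo]), the neighbour counts
   at b agreeing because a and the next vertex a2 both are neighbours of b. *)
Lemma wt_rev H p c t : is_graph dir H -> t != [::] -> wt H p c t != 0 ->
  wt H p c t * #|Nset H c :\: excl p|%:R =
  wt (swapped H c t) None (last c t) (rev (belast c t)) *
    #|Nset (swapped H c t) (last c t)|%:R.
Proof.
elim/pair_ind: t H p c => [//||a b t IH] H p c gH _ //=.
rewrite mulf_eq0 negb_or => /andP[hp hw]; have [hN _ _] := pstep_swap gH hp.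
have gH1 : is_graph dir (swap H c a b).
  by apply: swap_graph gH _; case/and5P: (pstep_viable hp).
rewrite mulrAC pstep_norm //.
case: t IH hw => [_ _|a2 [//|b2 t] IH hw].
  by rewrite /= mulr1 -(pstep_undo (q := None) gH hp) ?inE // mulr1 setD0.
set t1 := [:: a2, b2 & t] in IH hw *; set H1 := swap H c a b in hN gH1 hw *.
set H' := swapped H1 b t1; set e := last b t1.
have ev : ~~ odd (size (rev (belast b t1))) by rewrite -even_rev_belast (swaps_even (wt_swaps hw)).
have back : swapped H' e (rev (belast b t1)) = H1 by exact/esym/swaps_swapped/swaps_rev/wt_swaps/hw.
rewrite (rev_belast_step c a b t1) wt_cat // back last_rev head_belast last_pick_rev; last first.
  by move: ev; rewrite -even_rev_belast /= negbK.
have hp2 : pstep H1 (Some a) b a2 b2 != 0 by move: hw; rewrite /= mulf_eq0 negb_or => /andP[].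
have [/setDP[ha2 na2] _] := pstep_mem hp2.
have na : a \notin excl (Some a2) by move: na2; rewrite !inE eq_sym.
have -> : wt H1 (Some a2) b [:: a; c] = pstep H1 (Some a2) b a c by rewrite /= mulr1.
rewrite mulrAC -(IH _ _ _ gH1 isT hw) (cardsD1_mem hN ha2) -mulrA (mulrC _ (pstep _ _ _ _ _)).
by rewrite (pstep_undo gH hp na) mulrC.
Qed.

(* From now on G_0 is a graph, so that G_0 itself lies in \mathcal{G}. *)
Hypothesis hG0 : is_graph dir G0.

Lemma inGG_G0 : inGG G0.
Proof.
apply/and3P; split => //; first by apply/forallP=> u; rewrite !eqxx.
by apply/forallP=> u; apply/forallP=> v; apply/implyP.
Qed.

Lemma Ft_mem H u v : inGG H -> Ft dir G0 F u v -> ((u, v) \in H) = ((u, v) \in G0).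
Proof.
move=> hH; case/orP=> /forallP h.
  by rewrite (implyP (h H) hH) (implyP (h G0) inGG_G0).
by rewrite (negbTE (implyP (h H) hH)) (negbTE (implyP (h G0) inGG_G0)).
Qed.

(* |N_G(v)| is the in-degree of v minus the number of fixed in-edges, so it does
   not depend on G \in \mathcal{G}. *)
Lemma card_Nset_GG G Gs v : inGG G -> inGG Gs -> #|Nset G v| = #|Nset Gs v|.
Proof.
pose fixed_in := [set u | ((u, v) \in G0) && Ft dir G0 F u v].
have key H : inGG H -> (#|Nset H v| + #|fixed_in|)%N = indeg G0 v.
  move=> hH; have /and3P[_ /forallP/(_ v)/andP[_ /eqP <-] _] := hH.
  rewrite /indeg -(cardsID [set u | Ft dir G0 F u v] [set u | (u, v) \in H]) addnC.
  congr (_ + _)%N; apply: eq_card => u; rewrite !inE; last by rewrite andbC.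
  by case hF: (Ft _ _ _ u v); rewrite ?andbT ?andbF // (Ft_mem hH hF).
by move=> hG hGs; apply/eqP; rewrite -(eqn_add2r #|fixed_in|) !key.
Qed.

Lemma start_prob_GG G Gs (w0 : V) : inGG G -> inGG Gs ->
  start_prob G w0 = start_prob Gs w0.
Proof.
move=> hG hGs; have E v : (Nset G v != set0) = (Nset Gs v != set0).
  by rewrite -!cards_eq0 (card_Nset_GG v hG hGs).
rewrite /start_prob E; congr (if _ then (_%:R)^-1 else _).
by apply: eq_card => v; rewrite !inE E.
Qed.

(* Detailed balance: if the sampler moves from G to Gs along w with positive
   probability, it moves back from Gs to G along rev w with the same probability;
   the endpoint factors of [wt_rev] cancel since |N_G(w0)| = |N_Gs(w0)|. *)
Lemma Pw_rev_pos G Gs w : inGG G -> inGG Gs -> swaps_seq dir F G w = Some Gs ->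
  Pw G w != 0 -> Pw Gs (rev w) = Pw G w.
Proof.
case: w => [|w0 t] hG hGs; first by rewrite /Pw eqxx.
move=> hs; rewrite PwE !mulf_eq0 !negb_or => /and3P[sp0 cl0 wt0].
have cl : closes w0 t by case: (closes w0 t) cl0.
have gG : is_graph dir G by case/and3P: hG.
have n0 : #|Nset G w0|%:R != 0 :> rat.
  by move: sp0; rewrite pnatr_eq0 cards_eq0 /start_prob; case: ifP; rewrite ?eqxx.
rewrite rev_cons_last (closes_last _ cl) PwE (closes_rev cl) (start_prob_GG w0 hGs hG).
congr (_ * (_ * _)); first by rewrite cl.
have tn : t != [::] by case: t cl {hs wt0 cl0}.
have := wt_rev gG tn wt0; rewrite -(swaps_swapped hs) (closes_last _ cl) setD0.
by rewrite -(card_Nset_GG w0 hG hGs) => /(mulIf n0).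
Qed.

Lemma Pw_rev G Gs w : inGG G -> inGG Gs -> swaps_seq dir F G w = Some Gs ->
  Pw Gs (rev w) = Pw G w.
Proof.
move=> hG hGs hs; have gG : is_graph dir G by case/and3P: hG.
have [P0|] := eqVneq (Pw G w) 0; last exact: Pw_rev_pos.
have [P0'|] := eqVneq (Pw Gs (rev w)) 0; first by rewrite P0 P0'.
by move/(Pw_rev_pos hGs hG (swaps_seq_rev gG hs)); rewrite revK => ->.
Qed.

Lemma Pw_swaps G w : Pw G w != 0 -> exists H, swaps_seq dir F G w = Some H.
Proof.
case: w => [|w0 t]; first by rewrite /Pw eqxx.
by rewrite PwE !mulf_eq0 !negb_or => /and3P[_ _ /wt_swaps hs]; eexists; exact: hs.
Qed.

Lemma Vz_swaps G Gs w : inGG G -> inGG Gs -> swaps_seq dir F G w = Some Gs ->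
  Vz dir G0 F G w = Vz dir G0 F Gs w.
Proof.
move=> hG hGs hs; have gG : is_graph dir G by case/and3P: hG.
have gGs : is_graph dir Gs by case/and3P: hGs.
have [-> //|nGs] := eqVneq Gs G.
have R := swaps_seq_rev gG hs.
have z1 : Pw G (rev w) = 0.
  apply/eqP; apply: contraNT nGs => /Pw_swaps[H h]; apply/eqP; exact: swaps_seq_both hs h.
have z2 : Pw Gs w = 0.
  apply/eqP; apply: contraNT nGs => /Pw_swaps[H h].
  by have := swaps_seq_both gGs R; rewrite revK => /(_ _ h) ->.
rewrite /Vz z1 z2 -(Pw_rev hG hGs hs); case: (eqVneq (rev w) w) => [e|_] /=.
  by rewrite !addr0 e z2.
by rewrite addr0 add0r.
Qed.

Lemma Vz_rev G w : Vz dir G0 F G (rev w) = Vz dir G0 F G w.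
Proof.
rewrite /Vz revK; case: (eqVneq (rev w) w) => [e|_]; first by rewrite e.
by rewrite /= addrC.
Qed.

Lemma Vz_canon G w : Vz dir G0 F G (canon w) = Vz dir G0 F G w.
Proof. by case: (canon_cases w) => ->; rewrite ?Vz_rev. Qed.

Lemma Vz_Kmap G w : inGG G -> inGG (Kmap dir F w G) ->
  Vz dir G0 F G w = Vz dir G0 F (Kmap dir F w G) w.
Proof.
move=> hG hK; rewrite -[LHS]Vz_canon -[RHS]Vz_canon.
have [E|[_ E]|[_ _ KG]] := KmapP dir F w G; last by rewrite KG.
  exact: Vz_swaps E.
by rewrite -[LHS]Vz_rev -[RHS]Vz_rev; exact: Vz_swaps E.
Qed.

Lemma inW_rev w : inW (rev w) = inW w.
Proof.
case: w => [|x t] //; rewrite /inW size_rev rev_cons_last /=.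
by rewrite last_rev head_belast eq_sym.
Qed.

(* The decomposition Q(G, .) = sum_z V_G(z) K_z(G, .), sequences of length n at a time:
   group each sequence with its reverse, and use that the sampler's move along w
   is the move of K_z. *)
Lemma Qpart_Dpart n G Gs :
  is_graph dir G -> Qpart dir G0 F n G Gs = Dpart dir G0 F n G Gs.
Proof.
move=> gG; rewrite /Qpart /Dpart.
pose g (w : seq V) := Pw G w * (Kmap dir F w G == Gs)%:R.
(* Where the sampler has positive probability, its output is that of K_z. *)
transitivity (\sum_(w : n.-tuple V | inW w) g w).
  apply: eq_bigr => w _; rewrite /g.
  have [->|h] := eqVneq (Pw G w) 0; first by rewrite !mul0r.
  by rewrite (Pw_Kmap gG h).
(* The sequences that are not representatives are the reverses of the
   representatives w with rev w != w. *)
rewrite (bigID (fun w : n.-tuple V => canon w == w)) /=.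
have inj : injective (fun w : n.-tuple V => [tuple of rev w]).
  by move=> u v /(congr1 val) /= /(congr1 rev); rewrite !revK => /val_inj.
rewrite [X in _ + X](reindex_inj inj) /=.
pose rep_asym (w : n.-tuple V) := (inW w && (canon w == w)) && (rev w != w).
rewrite [X in _ + X](eq_bigl rep_asym); last first.
  move=> w; rewrite /rep_asym /= inW_rev canon_rev.
  case: (canon_cases w) => ->; first by rewrite eqxx andbT eq_sym.
  by rewrite eqxx andbF -andbA; case: eqP; rewrite ?andbF.
rewrite [X in _ + X]big_mkcondr -big_split /=; apply: eq_bigr => w _.
rewrite /g /Vz /Kker Kmap_rev mulrDl.
by case: ifP => _; rewrite ?mul0r ?addr0.
Qed.

End Sampler.

Unset Implicit Arguments.

Theorem lemma2 (V : finType) (dir : bool) (G0 F : {set V * V})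
    (hG0 : is_graph dir G0) :
  (* decomposition: Q(G,G') = sum_z V_G(z) K_z(G,G') (series over lengths) *)
  (forall G Gs : {set V * V}, inGG dir G0 F G -> inGG dir G0 F Gs ->
     forall eps : rat, 0 < eps -> exists N : nat, forall n : nat, (N <= n)%N ->
       `| \sum_(l < n) Qpart dir G0 F l G Gs - \sum_(l < n) Dpart dir G0 F l G Gs | < eps)
  /\
  (* symmetry of the decomposition *)
  (forall (G Gs : {set V * V}) (w : seq V), inGG dir G0 F G -> inGG dir G0 F Gs ->
     inW w -> 0 < Kker dir F w G Gs -> Vz dir G0 F G w = Vz dir G0 F Gs w)
  /\
  (* each K_z is symmetric, hence reversible w.r.t. the uniform distribution *)
  (forall (G Gs : {set V * V}) (w : seq V), inGG dir G0 F G -> inGG dir G0 F Gs ->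
     inW w ->
     Kker dir F w G Gs = Kker dir F w Gs G /\
     unif dir G0 F G * Kker dir F w G Gs = unif dir G0 F Gs * Kker dir F w Gs G).
Proof.
split; [|split].
- move=> G Gs hG _ eps eps0; exists 0%N => n _.
  have gG : is_graph dir G by case/and3P: hG.
  under eq_bigr => l _ do rewrite (Qpart_Dpart G0 F l Gs gG).
  by rewrite subrr normr0.
- move=> G Gs w hG hGs _; rewrite /Kker; case: eqP => [KG _|]; last by rewrite ltxx.
  by rewrite -KG; apply: Vz_Kmap; rewrite ?KG.
- move=> G Gs w hG hGs _.
  have [gG gGs] : is_graph dir G /\ is_graph dir Gs by case/and3P: hG; case/and3P: hGs.
  have sym : Kker dir F w G Gs = Kker dir F w Gs G.
    by rewrite /Kker; congr ((nat_of_bool _)%:R); apply/eqP/eqP => <-; rewrite Kmap_invol.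
  by split => //; rewrite sym /unif hG hGs.
Qed.
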